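(* The string rewriting system $L$ over the alphabet $\{i,0_2,0_3,\lhd,\rhd\}$ with the seven rules $0_2\rhd\to\rhd$, $0_2 i\rhd\to 0_3 i i\rhd$, $0_2 ii\to i0_2$, $i0_3\to 0_3 iii$, $0_20_3\to 0_30_2$, $\lhd i\to\lhd 0_2$, $\lhd 0_3\to \lhd 0_2 i$ is terminating if and only if for every $n\in\mathbb{N}^+$ the trajectory $n,\tau(n),\tau^2(n),\dots$ contains $1$, where $\tau(n)=n/2$ for even $n$ and $\tau(n)=(3n+1)/2$ for odd $n$ (equivalently, iff the Collatz conjecture holds).
   Context: An SRS induces the rewrite relation $u\ell v\to urv$ for each rule $\ell\to r$; it is terminating if no infinite rewrite sequence exists. (Intended reading: $i(x)=x+1$, $0_2(x)=2x$, $0_3(x)=3x$, $\lhd(x)=1$, $\rhd(x)=x$, a string $\lhd d_1\cdots d_k\rhd$ representing $d_k(\cdots d_1(1))$.) *)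

From Stdlib Require Import List Arith PeanoNat.
Import ListNotations.

Inductive sym : Type := Si | S02 | S03 | Sl | Sr.

Definition srs := list (list sym * list sym).

Definition rewrite_step (R : srs) (s t : list sym) : Prop :=
  exists (u v l r : list sym), In (l, r) R /\ s = u ++ l ++ v /\ t = u ++ r ++ v.

Definition terminating (R : srs) : Prop :=
  ~ exists f : nat -> list sym, forall k, rewrite_step R (f k) (f (S k)).

Definition L_srs : srs :=
  [ ([S02; Sr], [Sr]);
    ([S02; Si; Sr], [S03; Si; Si; Sr]);
    ([S02; Si; Si], [Si; S02]);
    ([Si; S03], [S03; Si; Si; Si]);
    ([S02; S03], [S03; S02]);
    ([Sl; Si], [Sl; S02]);
    ([Sl; S03], [Sl; S02; Si]) ].

Definition tau (n : nat) : nat :=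
  if Nat.even n then n / 2 else (3 * n + 1) / 2.

Definition collatz_conjecture : Prop :=
  forall n : nat, 1 <= n -> exists k : nat, Nat.iter k tau n = 1.

(* A string  ◁ d_1 ... d_k ▷  over the digits i, 0_2, 0_3 encodes the number
   d_k(...d_1(1)...) with i(x) = x+1, 0_2(x) = 2x, 0_3(x) = 3x.

   Let p(m) be the Collatz stopping time of m, so
   p(tau m) < p m for m >= 2.  Reading a string from left to right with a small
   automaton, every ▷ is charged p(n) when preceded by an encoding ◁ w of n,
   and otherwise the number of 0_2's read since the previous ▷.  The two rules
   acting at ▷ strictly decrease the total charge; the five others preserve it
   and strictly decrease a linear interpretation of the letters.  The pair of
   measures decreases lexicographically, which forbids infinite reductions.

   If the trajectory of n avoids 1, the string
   ◁ i^(n-1) ▷ admits an infinite reduction: repeatedly a 0_2 is created next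
   to ◁, travels right through the digits and performs a Collatz step at ▷;
   every intermediate string still encodes a point of the trajectory of n. *)

From Stdlib Require Import List Arith PeanoNat Lia Wellfounded ConstructiveEpsilon.
From Stdlib Require Import Classical IndefiniteDescription.
Import ListNotations.

Lemma step_rule (R : srs) (l r v : list sym) :
  In (l, r) R -> rewrite_step R (l ++ v) (r ++ v).
Proof. intros H. exists [], v, l, r. auto. Qed.

Lemma step_cons (R : srs) (a : sym) (s t : list sym) :
  rewrite_step R s t -> rewrite_step R (a :: s) (a :: t).
Proof.
  intros (u & v & l & r & Hin & -> & ->). exists (a :: u), v, l, r. auto.
Qed.

Lemma no_infinite_descent {A : Type} (lt : A -> A -> Prop) :
  well_founded lt -> ~ exists f : nat -> A, forall k, lt (f (S k)) (f k).
Proof.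
  intros Hwf [f Hf].
  assert (Hnot : forall a k, f k = a -> False).
  { intros a. induction a as [a IH] using (well_founded_ind Hwf).
    intros k <-. exact (IH _ (Hf k) (S k) eq_refl). }
  exact (Hnot (f 0) 0 eq_refl).
Qed.

Lemma terminating_of_measure {A : Type} (R : srs) (lt : A -> A -> Prop)
    (mu : list sym -> A) :
  well_founded lt -> (forall s t, rewrite_step R s t -> lt (mu t) (mu s)) ->
  terminating R.
Proof.
  intros Hwf Hdec [f Hf]. apply (no_infinite_descent lt Hwf).
  exists (fun k => mu (f k)). intros k. apply Hdec, Hf.
Qed.

Lemma not_terminating_of_invariant (R : srs) (P : list sym -> Prop) (s0 : list sym) :
  P s0 -> (forall s, P s -> exists t, rewrite_step R s t /\ P t) -> ~ terminating R.
Proof.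
  intros H0 Hnext T.
  pose (next := fun x : {s | P s} =>
          let (t, Ht) := constructive_indefinite_description _ (Hnext _ (proj2_sig x))
          in exist P t (proj2 Ht)).
  assert (Hstep : forall x, rewrite_step R (proj1_sig x) (proj1_sig (next x))).
  { intros x. unfold next.
    destruct (constructive_indefinite_description _ _) as [t Ht]. exact (proj1 Ht). }
  apply T. exists (fun k => proj1_sig (Nat.iter k next (exist P s0 H0))).
  intros k. rewrite Nat.iter_succ. apply Hstep.
Qed.

Lemma tau_even (x : nat) : tau (2 * x) = x.
Proof.
  unfold tau. rewrite Nat.even_mul. cbn [Nat.even orb].
  rewrite Nat.mul_comm. apply Nat.div_mul. lia.
Qed.

Lemma tau_odd (x : nat) : tau (2 * x + 1) = 3 * x + 2.
Proof.
  unfold tau. rewrite Nat.even_add, Nat.even_mul. cbn [Nat.even orb Bool.eqb].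
  replace (3 * (2 * x + 1) + 1) with ((3 * x + 2) * 2) by lia.
  apply Nat.div_mul. lia.
Qed.

(* Under the Collatz conjecture the stopping time is a potential that strictly
   decreases along the Collatz map above 1. *)
Lemma collatz_potential :
  collatz_conjecture -> exists p : nat -> nat, forall m, 2 <= m -> p (tau m) < p m.
Proof.
  intros Hc.
  pose (reaches m k := m <= 1 \/ Nat.iter k tau m = 1).
  assert (Hdec : forall m k, {reaches m k} + {~ reaches m k}).
  { intros m k. destruct (le_dec m 1), (Nat.eq_dec (Nat.iter k tau m) 1);
      unfold reaches; tauto. }
  assert (Hex : forall m, exists k, reaches m k).
  { intros m. destruct (le_dec m 1) as [Hle|Hgt].
    - exists 0. now left.
    - destruct (Hc m) as [k Hk]; [lia|]. exists k. now right. }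
  exists (fun m => proj1_sig (epsilon_smallest _ (Hdec m) (Hex m))).
  intros m Hm.
  destruct (epsilon_smallest _ (Hdec m) (Hex m)) as [k Hk].
  destruct (epsilon_smallest _ (Hdec (tau m)) (Hex (tau m))) as [k' Hk']. simpl.
  destruct Hk as [Hk _], Hk' as [_ Hmin].
  destruct Hk as [Hk | Hk]; [lia|].
  destruct k as [|k]; [simpl in Hk; lia|].
  rewrite Nat.iter_succ_r in Hk.
  assert (k' <= k) by (apply Hmin; now right). lia.
Qed.

(** * Collatz implies termination *)

(* State of the left-to-right reading automaton.  [Free c]: no ◁ since the last
   ▷, and c letters 0_2 read since then.  [Anchored w]: the digits read since
   the last ◁ encode the number w + 1. *)
Inductive mode := Free (c : nat) | Anchored (w : nat).

Definition mode_step (m : mode) (x : sym) : mode :=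
  match x, m with
  | Si, Free c => Free c
  | Si, Anchored w => Anchored (S w)
  | S02, Free c => Free (S c)
  | S02, Anchored w => Anchored (2 * w + 1)
  | S03, Free c => Free c
  | S03, Anchored w => Anchored (3 * w + 2)
  | Sl, _ => Anchored 0
  | Sr, _ => Free 0
  end.

Definition mode_after (m : mode) (s : list sym) : mode := fold_left mode_step s m.

(* Linear interpretation of the letters (a composition of strictly monotone
   maps), used to order the rules that do not touch ▷. *)
Definition letter_interp (x : nat) (a : sym) : nat :=
  match a with Si => x + 2 | S02 => x + 1 | S03 => 4 * x | Sl => x + 2 | Sr => x + 1 end.

Definition interp (x : nat) (s : list sym) : nat := fold_left letter_interp s x.

Lemma interp_mono (s : list sym) (x y : nat) : x < y -> interp x s < interp y s.
Proof.
  revert x y. induction s as [|a s IH]; intros x y H; [exact H|].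
  apply IH. destruct a; simpl; lia.
Qed.

Section CollatzTermination.

Variable p : nat -> nat.
Hypothesis p_decreases : forall m, 2 <= m -> p (tau m) < p m.

Definition charge (m : mode) (x : sym) : nat :=
  match x, m with
  | Sr, Free c => c
  | Sr, Anchored w => p (S w)
  | _, _ => 0
  end.

Fixpoint weight (m : mode) (s : list sym) : nat :=
  match s with
  | [] => 0
  | x :: s' => charge m x + weight (mode_step m x) s'
  end.

Lemma weight_app (m : mode) (s1 s2 : list sym) :
  weight m (s1 ++ s2) = weight m s1 + weight (mode_after m s1) s2.
Proof.
  revert m. induction s1 as [|x s1 IH]; intros m; simpl; [reflexivity|].
  rewrite IH. lia.
Qed.

Lemma rule_decreases (l r : list sym) : In (l, r) L_srs -> forall m,
  mode_after m r = mode_after m l /\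
  (weight m r < weight m l \/
   (weight m r = weight m l /\ forall x, interp x r < interp x l)).
Proof.
  intros Hin m. simpl in Hin.
  destruct Hin as [E|[E|[E|[E|[E|[E|[E|[]]]]]]]]; injection E as <- <-;
    destruct m as [c|w]; unfold mode_after, interp; simpl;
    (split; [first [reflexivity | f_equal; lia] |]);
    try (right; split; [reflexivity | intros; lia]);
    left; try lia.
  (* What remains are the rules at ▷ after an encoding of n = w + 1, where the
     charge goes from p(2n) to p(n), resp. from p(2n+1) to p(3n+2). *)
  - pose proof (p_decreases (2 * S w)) as H. rewrite tau_even in H.
    replace (S (w + (w + 0) + 1)) with (2 * S w) by lia. lia.
  - pose proof (p_decreases (2 * S w + 1)) as H. rewrite tau_odd in H.
    replace (S (S (w + (w + 0) + 1))) with (2 * S w + 1) by lia.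
    replace (S (S (S (w + (w + (w + 0)) + 2)))) with (3 * S w + 2) by lia. lia.
Qed.

Definition measure (s : list sym) : nat * nat := (weight (Free 0) s, interp 0 s).

Lemma step_decreases (s t : list sym) : rewrite_step L_srs s t ->
  Relation_Operators.slexprod nat nat lt lt (measure t) (measure s).
Proof.
  intros (u & v & l & r & Hin & -> & ->). unfold measure.
  rewrite !weight_app. unfold interp. rewrite !fold_left_app.
  set (m := mode_after (Free 0) u).
  destruct (rule_decreases l r Hin m) as [Hmode [Hw | [Hw Hi]]];
    rewrite Hmode.
  - apply Relation_Operators.left_slex. lia.
  - rewrite Hw. apply Relation_Operators.right_slex, interp_mono, Hi.
Qed.

End CollatzTermination.

Lemma terminating_of_collatz : collatz_conjecture -> terminating L_srs.
Proof.
  intros Hc. destruct (collatz_potential Hc) as [p Hp].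
  apply (terminating_of_measure L_srs (Relation_Operators.slexprod nat nat lt lt)
           (measure p)).
  - apply wf_slexprod; apply lt_wf.
  - apply step_decreases, Hp.
Qed.

(** * Termination implies Collatz *)

Definition digit (a : sym) : Prop :=
  match a with Si | S02 | S03 => True | Sl | Sr => False end.

Definition digits (w : list sym) : Prop := Forall digit w.

Definition digit_value (v : nat) (a : sym) : nat :=
  match a with Si => S v | S02 => 2 * v | S03 => 3 * v | Sl | Sr => v end.

Definition value (v : nat) (w : list sym) : nat := fold_left digit_value w v.

Lemma value_repeat (m v : nat) : value v (repeat Si m) = v + m.
Proof.
  revert v. induction m as [|m IH]; intros v; simpl; [lia|].
  rewrite IH. lia.
Qed.

Definition tracks (w' w : list sym) : Prop :=
  (forall v, value v w' = value v w) \/ (forall v, value v w' = tau (value v w)).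

Lemma tracks_cons (a : sym) (w' w : list sym) : tracks w' w -> tracks (a :: w') (a :: w).
Proof. intros [H | H]; [left | right]; intros v; apply H. Qed.

Definition marker_moves (rest : list sym) : Prop :=
  exists w', digits w' /\ rewrite_step L_srs (S02 :: rest ++ [Sr]) (w' ++ [Sr]) /\
             tracks w' (S02 :: rest).

Ltac rule_in := simpl; tauto.
Ltac digits_ok := repeat (constructor; simpl; auto).

(* Proved jointly for [rest] and [Si :: rest], since the marker may jump over
   one i. *)
Lemma marker_moves_digits (rest : list sym) :
  digits rest -> marker_moves rest /\ marker_moves (Si :: rest).
Proof.
  induction rest as [|a rest IH]; intros Hd.
  - split.
    + exists []. split; [constructor|]. split.
      * apply (step_rule _ [S02; Sr] [Sr] []). rule_in.
      * right. intros v. symmetry. apply tau_even.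
    + exists [S03; Si; Si]. split; [digits_ok|]. split.
      * apply (step_rule _ [S02; Si; Sr] [S03; Si; Si; Sr] []). rule_in.
      * right. intros v. unfold value. simpl.
        replace (S (v + (v + 0))) with (2 * v + 1) by lia. rewrite tau_odd. lia.
  - inversion Hd as [|? ? Ha Hrest]; subst.
    destruct (IH Hrest) as [[w'' (Hd'' & Hstep & Htr)] Hsi].
    destruct a; simpl in Ha; try contradiction; split; try exact Hsi.
    + exists (Si :: S02 :: rest). split; [digits_ok|]. split.
      * apply (step_rule _ [S02; Si; Si] [Si; S02] (rest ++ [Sr])). rule_in.
      * left. intros v. unfold value. simpl. f_equal. lia.
    + exists (S02 :: w''). split; [digits_ok|]. split.
      * apply step_cons, Hstep.
      * apply tracks_cons, Htr.
    + exists (S02 :: Si :: w''). split; [digits_ok|]. split.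
      * apply step_cons, step_cons, Hstep.
      * apply tracks_cons, tracks_cons, Htr.
    + exists (S03 :: S02 :: rest). split; [digits_ok|]. split.
      * apply (step_rule _ [S02; S03] [S03; S02] (rest ++ [Sr])). rule_in.
      * left. intros v. unfold value. simpl. f_equal. lia.
    + exists (S02 :: S03 :: Si :: Si :: Si :: rest). split; [digits_ok|]. split.
      * apply step_cons, (step_rule _ [Si; S03] [S03; Si; Si; Si] (rest ++ [Sr])).
        rule_in.
      * left. intros v. unfold value. simpl. f_equal. lia.
Qed.

Lemma anchored_step (w : list sym) : digits w -> w <> [] ->
  exists w', digits w' /\ rewrite_step L_srs (Sl :: w ++ [Sr]) (Sl :: w' ++ [Sr]) /\
             (value 1 w' = value 1 w \/ value 1 w' = tau (value 1 w)).
Proof.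
  intros Hd Hne. destruct w as [|a rest]; [congruence|].
  inversion Hd as [|? ? Ha Hrest]; subst.
  destruct a; simpl in Ha; try contradiction.
  - exists (S02 :: rest). split; [digits_ok|]. split.
    + apply (step_rule _ [Sl; Si] [Sl; S02] (rest ++ [Sr])). rule_in.
    + now left.
  - destruct (marker_moves_digits rest Hrest) as [(w' & Hd' & Hstep & Htr) _].
    exists w'. split; [exact Hd'|]. split.
    + apply step_cons, Hstep.
    + destruct Htr as [H | H]; [left | right]; apply H.
  - exists (S02 :: Si :: rest). split; [digits_ok|]. split.
    + apply (step_rule _ [Sl; S03] [Sl; S02; Si] (rest ++ [Sr])). rule_in.
    + now left.
Qed.

Definition encodes_orbit (n : nat) (s : list sym) : Prop :=
  exists w k, digits w /\ s = Sl :: w ++ [Sr] /\ value 1 w = Nat.iter k tau n.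

Lemma collatz_of_terminating : terminating L_srs -> collatz_conjecture.
Proof.
  intros T n Hn. apply NNPP. intros Hdiverges.
  apply (not_terminating_of_invariant L_srs (encodes_orbit n)
           (Sl :: repeat Si (n - 1) ++ [Sr])); [| | exact T].
  - exists (repeat Si (n - 1)), 0. split; [apply Forall_forall|split; [reflexivity|]].
    + intros x Hx. apply repeat_spec in Hx. now subst.
    + rewrite value_repeat. simpl. lia.
  - intros s (w & k & Hd & -> & Hv).
    assert (Hne : w <> []).
    { intros ->. apply Hdiverges. exists k. now rewrite <- Hv. }
    destruct (anchored_step w Hd Hne) as (w' & Hd' & Hstep & [Hsame | Htau]).
    + exists (Sl :: w' ++ [Sr]). split; [exact Hstep|]. exists w', k. now rewrite Hsame.
    + exists (Sl :: w' ++ [Sr]). split; [exact Hstep|]. exists w', (S k).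
      rewrite Nat.iter_succ, Htau, Hv. auto.
Qed.

Theorem mainTheorem8 : terminating L_srs <-> collatz_conjecture.
Proof.
  split.
  - exact collatz_of_terminating.
  - exact terminating_of_collatz.
Qed.
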